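(* Let $\mathcal{L}$ and $\mathcal{L}'$ be lattices such that $\mathcal{L}$ can be embedded in $\mathcal{L}'$, and let $l,u:\mathbb{N}\to\mathbb{N}$. If $\mathcal{L}$ is $\Omega(l(n))$ then $\mathcal{L}'$ is $\Omega(l(n))$; and if $\mathcal{L}'$ is $O(u(n))$ then $\mathcal{L}$ is $O(u(n))$.
   Context: A lattice means a partially ordered set $(\mathcal{L},\sqsubseteq)$ with least element $\bot$ in which any two elements have a least upper bound $\sqcup$; for finite $S$, $\bigsqcup S$ is its least upper bound ($\bigsqcup\emptyset=\bot$). A lattice homomorphism $h:\mathcal{L}\to\mathcal{L}'$ satisfies $h(\bot_{\mathcal{L}})=\bot_{\mathcal{L}'}$ and $h(\ell\sqcup\ell')=h(\ell)\sqcup h(\ell')$; it is an embedding (and $\mathcal{L}$ can be embedded in $\mathcal{L}'$) if $h$ is injective. The closure set of a finite $S\subseteq\mathcal{L}$ is $C(S)=\{\bigsqcup S' : S'\subseteq S\}$, and $CS_{\mathcal{L}}(n)=\max\{|C(S)| : S\subseteq\mathcal{L}\text{ finite}, |S|\le n\}$. For $f,g:\mathbb{N}\to\mathbb{N}$: $f$ is $O(g)$ iff $\exists N_0\in\mathbb{N},\exists$ rational $C>0$ with $f(n)\le Cg(n)$ for all $n\ge N_0$; $f$ is $\Omega(g)$ iff $\exists N_0,\exists C>0$ rational with $f(n)\ge Cg(n)$ for all $n\ge N_0$. A lattice $\mathcal{L}$ is $O(f(n))$ (resp. $\Omega(f(n))$) iff $CS_{\mathcal{L}}(n)$ is. *)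

(* lattices = join-semilattices with bottom (bJoinSemilatticeType). *)
From HB Require Import structures.
From mathcomp Require Import all_boot all_order all_algebra.
From mathcomp Require Import finmap.
From Stdlib Require Import Classical ClassicalEpsilon.
Set Implicit Arguments. Unset Strict Implicit. Unset Printing Implicit Defensive.
Import Order.TTheory GRing.Theory Num.Theory.
Local Open Scope order_scope.


Definition lattice_hom (d : Order.disp_t) (L : bJoinSemilatticeType d)
  (d' : Order.disp_t) (L' : bJoinSemilatticeType d') (h : L -> L') : Prop :=
  h \bot = \bot /\ forall x y : L, h (Order.join x y) = Order.join (h x) (h y).

Definition embeds (d : Order.disp_t) (L : bJoinSemilatticeType d)
  (d' : Order.disp_t) (L' : bJoinSemilatticeType d') : Prop :=
  exists h : L -> L', lattice_hom h /\ injective h.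

Definition closure_set (d : Order.disp_t) (L : bJoinSemilatticeType d)
  (S : {fset L}) : {fset L} :=
  [fset (\big[(@Order.join d L)/(@Order.bottom d L)]_(x <- S') x) | S' : {fset L} in fpowerset S]%fset.

Definition CS_vals (d : Order.disp_t) (L : bJoinSemilatticeType d) (n : nat)
  (k : nat) : Prop :=
  exists S : {fset L}, (#|` S| <= n)%N /\ k = #|` closure_set S|.

Lemma CS_vals_bound (d : Order.disp_t) (L : bJoinSemilatticeType d) n k :
  CS_vals L n k -> (k <= 2 ^ n)%N.
Proof.
move=> [S [hS ->]].
rewrite /closure_set.
apply: leq_trans; first exact: leq_imfset_card.
have -> : size (enum_finmem (mem_fin (fin_finpred (fpowerset S)))) = #|` fpowerset S| by [].
rewrite card_fpowerset leq_exp2l //.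
Qed.

Lemma CS_max_exists (d : Order.disp_t) (L : bJoinSemilatticeType d) n :
  exists k, CS_vals L n k /\ forall k', CS_vals L n k' -> (k' <= k)%N.
Proof.
apply: NNPP => Hno.
have H : forall j, exists k, CS_vals L n k /\ (j <= k)%N.
  elim=> [|j [k [Hk Hjk]]].
    by exists #|` closure_set (fset0 : {fset L})|; split=> //; exists fset0.
  apply: NNPP => Hj; apply: Hno; exists k; split=> // k' Hk'.
  rewrite leqNgt; apply/negP => lt; apply: Hj; exists k'; split=> //.
  exact: leq_ltn_trans Hjk lt.
have [k [Hk Hle]] := H (2 ^ n).+1.
by have := CS_vals_bound Hk; rewrite leqNgt Hle.
Qed.

Definition CS (d : Order.disp_t) (L : bJoinSemilatticeType d) (n : nat) : nat :=
  proj1_sig (constructive_indefinite_description _ (CS_max_exists L n)).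

Lemma CSP (d : Order.disp_t) (L : bJoinSemilatticeType d) n :
  CS_vals L n (CS L n) /\ forall k', CS_vals L n k' -> (k' <= CS L n)%N.
Proof. rewrite /CS; case: constructive_indefinite_description => //. Qed.

Definition bigO (f g : nat -> nat) : Prop :=
  exists (N0 : nat) (C : rat), (0 < C)%R /\
    forall n, (N0 <= n)%N -> ((f n)%:R <= C * (g n)%:R)%R.

Definition bigOmega (f g : nat -> nat) : Prop :=
  exists (N0 : nat) (C : rat), (0 < C)%R /\
    forall n, (N0 <= n)%N -> ((f n)%:R >= C * (g n)%:R)%R.

From mathcomp Require Import all_boot all_order all_algebra.
From mathcomp Require Import finmap.
Set Implicit Arguments. Unset Strict Implicit. Unset Printing Implicit Defensive.
Import Order.TTheory Num.Theory.
Local Open Scope order_scope.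
Local Open Scope fset_scope.

(* An injective lattice homomorphism maps the closure set of [S] injectively
   into the closure set of the image of [S], so [CS] can only grow along an
   embedding; both asymptotic statements follow from this pointwise bound. *)

Lemma big_join_imfset (d : Order.disp_t) (L : bJoinSemilatticeType d)
    (T : choiceType) (F : T -> L) (A : {fset T}) :
  \join_(y <- [fset F x | x in A]) y = \join_(x <- A) F x.
Proof.
rewrite -[RHS](big_map F xpredT idfun) /=.
apply: eq_big_idem; first exact: joinxx.
by move=> y; apply/imfsetP/mapP => -[x xA ->]; exists x.
Qed.

Section LatticeHom.
Variables (d : Order.disp_t) (L : bJoinSemilatticeType d).
Variables (d' : Order.disp_t) (L' : bJoinSemilatticeType d').
Variable h : L -> L'.
Hypothesis hom_h : lattice_hom h.

Lemma lattice_hom_big_join (s : seq L) :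
  h (\join_(x <- s) x) = \join_(x <- s) h x.
Proof. by case: hom_h => h0 hU; apply: big_morph. Qed.

Lemma closure_set_hom_sub (S : {fset L}) :
  [fset h x | x in closure_set S] `<=` closure_set [fset h x | x in S].
Proof.
apply/fsubsetP => _ /imfsetP [_ /imfsetP [S' /= S'S ->] ->].
rewrite lattice_hom_big_join -big_join_imfset.
apply/imfsetP; exists [fset h x | x in S'] => //=.
by rewrite fpowersetE; apply/subset_imfset/fsubsetP; rewrite -fpowersetE.
Qed.

Lemma card_closure_set_le_hom_inj (S : {fset L}) : injective h ->
  #|` closure_set S| <= #|` closure_set [fset h x | x in S]|.
Proof.
move=> inj_h; have <- : #|` [fset h x | x in closure_set S]| = #|` closure_set S|.
  by rewrite card_imfset.
exact/fsubset_leq_card/closure_set_hom_sub.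
Qed.

End LatticeHom.

Lemma CS_le_embeds (d : Order.disp_t) (L : bJoinSemilatticeType d)
    (d' : Order.disp_t) (L' : bJoinSemilatticeType d') (n : nat) :
  embeds L L' -> CS L n <= CS L' n.
Proof.
move=> [h [hom_h inj_h]].
have [[S [Sn ->]] _] := CSP L n.
have [_ CS'_max] := CSP L' n.
apply: leq_trans (card_closure_set_le_hom_inj hom_h S inj_h) (CS'_max _ _).
by exists [fset h x | x in S]; rewrite card_imfset.
Qed.

Lemma bigOmega_le (f g l : nat -> nat) :
  (forall n, f n <= g n) -> bigOmega f l -> bigOmega g l.
Proof.
move=> fg [N0 [C [C_gt0 lb]]]; exists N0, C; split=> // n /lb.
by move/le_trans; apply; rewrite ler_nat.
Qed.

Lemma bigO_le (f g u : nat -> nat) :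
  (forall n, f n <= g n) -> bigO g u -> bigO f u.
Proof.
move=> fg [N0 [C [C_gt0 ub]]]; exists N0, C; split=> // n /ub.
by apply: le_trans; rewrite ler_nat.
Qed.

Theorem mainTheorem2 (d : Order.disp_t) (L : bJoinSemilatticeType d)
  (d' : Order.disp_t) (L' : bJoinSemilatticeType d') (l u : nat -> nat) :
  embeds L L' ->
  (bigOmega (CS L) l -> bigOmega (CS L') l) /\
  (bigO (CS L') u -> bigO (CS L) u).
Proof.
move=> emb; have CS_le n := CS_le_embeds n emb.
by split; [apply: bigOmega_le | apply: bigO_le].
Qed.
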